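(* Let $G$ be a bipartite graph with minimum degree $\delta$. Then $R(G)\leqslant\sqrt{\delta}$. Moreover, if $\delta\geqslant 2$, or if $\delta=1$ and $G$ has a connected component with minimum degree $1$ that is not isomorphic to $K_2$, then $R(G)<\sqrt{\delta}$.
   Context: All graphs are simple. For a graph $G$ of order $n$ with adjacency eigenvalues $\lambda_1\geqslant\cdots\geqslant\lambda_n$, the HL-index is $R(G)=\max\{|\lambda_{\lfloor (n+1)/2\rfloor}|,\ |\lambda_{\lceil (n+1)/2\rceil}|\}$. *)

From HB Require Import structures.
From mathcomp Require Import all_boot all_order all_algebra.
Set Implicit Arguments. Unset Strict Implicit. Unset Printing Implicit Defensive.
Import Order.TTheory GRing.Theory Num.Theory.
Local Open Scope ring_scope.

Definition simple_graph (n : nat) (e : rel 'I_n) : Prop :=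
  symmetric e /\ irreflexive e.

Definition deg (n : nat) (e : rel 'I_n) (v : 'I_n) : nat := #|[set w | e v w]|.

(* minimum degree of the graph (n > 0 assumed; n is an upper bound of degrees) *)
Definition min_degree (n : nat) (e : rel 'I_n) : nat :=
  \big[minn/n]_(v < n) deg e v.

Definition bipartite (n : nat) (e : rel 'I_n) : Prop :=
  exists f : 'I_n -> bool, forall v w, e v w -> f v != f w.

Definition component (n : nat) (e : rel 'I_n) (v : 'I_n) : {set 'I_n} :=
  [set w | connect e v w].

(* minimum degree of the component C (as induced subgraph; degrees inside a
   component equal degrees in G) *)
Definition comp_min_degree (n : nat) (e : rel 'I_n) (C : {set 'I_n}) : nat :=
  \big[minn/n]_(v in C) deg e v.

Definition is_K2 (n : nat) (e : rel 'I_n) (C : {set 'I_n}) : Prop :=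
  exists a b : 'I_n, a != b /\ C = [set a; b] /\ e a b.

Definition adjmx (R : rcfType) (n : nat) (e : rel 'I_n) : 'M[R]_n :=
  \matrix_(i, j) (e i j)%:R.

(* s is the list of eigenvalues (with multiplicity) of A in nonincreasing
   order: lambda_1 >= ... >= lambda_n, s`_(i-1) = lambda_i *)
Definition sorted_spectrum (R : rcfType) (n : nat) (A : 'M[R]_n) (s : seq R) : Prop :=
  sorted (fun x y => y <= x) s /\ char_poly A = \prod_(x <- s) ('X - x%:P).

(* HL-index: max(|lambda_floor((n+1)/2)|, |lambda_ceil((n+1)/2)|), 1-based
   indices; 0-based these are (n+1)/2 - 1 and (n+2)/2 - 1. *)
Definition HL_index (R : rcfType) (n : nat) (s : seq R) : R :=
  Num.max `|s`_((n.+1)./2).-1| `|s`_((n.+2)./2).-1|.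

(* Let A be the adjacency matrix of G and s its spectrum.
   1. Conjugating A by the diagonal sign matrix of a proper 2-colouring gives
      -A, so s is symmetric about 0.  For a nonincreasing list symmetric about
      0, the HL-index is the least absolute value of an entry; hence
      R(G) <= |x| for every eigenvalue x.
   2. Diagonalizing A^2 = P^* diag(x_k^2) P with P unitary exhibits
      (A^2)_vv = deg v as a convex combination of the x_k^2: some x_k^2 is
      at most deg v, and if none is smaller then row v of A^2 vanishes off
      the diagonal, i.e. v has no walk of length 2 to another vertex.
   3. Hence R(G) <= sqrt(deg v) for every vertex v, strictly as soon as a
      walk v, w, u with u <> v exists.  If delta >= 2 any vertex of minimum
      degree has such a walk; if delta = 1, a degree-1 vertex of a component
      that is not K_2 has one. *)

From mathcomp Require Import all_boot all_order all_algebra.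
From mathcomp Require Import complex ring lra zify.
Set Implicit Arguments. Unset Strict Implicit. Unset Printing Implicit Defensive.
Import Order.TTheory GRing.Theory Num.Theory.
Local Open Scope ring_scope.

Lemma char_poly_similar (F : fieldType) n (P B : 'M[F]_n) : P \in unitmx ->
  char_poly (invmx P *m B *m P) = char_poly B.
Proof.
move=> Pu; rewrite /char_poly.
have -> : char_poly_mx (invmx P *m B *m P) =
  map_mx polyC (invmx P) *m char_poly_mx B *m map_mx polyC P.
  rewrite /char_poly_mx mulmxBr mulmxBl -!map_mxM.
  rewrite mul_mx_scalar -scalemxAl -mul_scalar_mx -mulmxA -map_mxM mulVmx //.
  by rewrite map_mx1 mulmx1.
rewrite !det_mulmx !det_map_mx mulrC mulrA -rmorphM.
by rewrite -det_mulmx mulmxV // det1 mul1r.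
Qed.

(* A matrix whose support is bipartite for the colouring f is conjugate to its
   opposite via the diagonal sign matrix of f. *)
Lemma char_poly_opp_bipartite (F : fieldType) n (A : 'M[F]_n) (f : 'I_n -> bool) :
  (forall i j, A i j != 0 -> f i != f j) -> char_poly (- A) = char_poly A.
Proof.
move=> f_proper.
pose D : 'M[F]_n := diag_mx (\row_i (-1) ^+ f i).
have DD : D *m D = 1%:M.
  apply/matrixP => i j; rewrite mul_diag_mx !mxE.
  by case: eqP => [->|]; rewrite ?mulr0n ?mulr0 // !mulr1n -signr_addb addbb.
have D_unit : D \in unitmx by case: (mulmx1_unit DD).
have D_inv : invmx D = D by rewrite -[invmx D]mulmx1 -DD mulmxA mulVmx // mul1mx.
have DAD : invmx D *m A *m D = - A.
  rewrite D_inv; apply/matrixP => i j; rewrite mul_mx_diag mul_diag_mx !mxE.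
  have [->|Aij] := eqVneq (A i j) 0; first by rewrite !mulr0 mul0r oppr0.
  have := f_proper i j Aij.
  by case: (f i); case: (f j) => //= _; rewrite ?mulN1r ?mulrN1 ?mul1r ?mulr1.
by rewrite -DAD char_poly_similar.
Qed.

Lemma char_poly_compN (R : comNzRingType) n (A : 'M[R]_n) :
  char_poly A \Po (- 'X) = (-1) ^+ n * char_poly (- A).
Proof.
rewrite /char_poly -det_map_mx.
have -> : map_mx (comp_poly (- 'X)) (char_poly_mx A) = - char_poly_mx (- A).
  apply/matrixP => i j; rewrite !mxE /= comp_polyB comp_polyC.
  rewrite [_ \Po _](rmorphMn (comp_poly (- 'X))) /= comp_polyX.
  by rewrite polyCN mulNrn opprD opprK.
by rewrite -scaleN1r detZ.
Qed.

Lemma prod_NXsubC (R : comNzRingType) (s : seq R) :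
  \prod_(x <- s) (- 'X - x%:P) = (-1) ^+ size s * \prod_(x <- map -%R s) ('X - x%:P).
Proof.
elim: s => [|x s IH]; first by rewrite !big_nil mul1r.
rewrite /= !big_cons IH exprS polyCN.
have -> : - 'X - x%:P = - ('X - - x%:P) :> {poly R} by rewrite opprB addrC.
ring.
Qed.

Lemma spectrum_symmetric (F : fieldType) n (A : 'M[F]_n) s :
  char_poly (- A) = char_poly A ->
  char_poly A = \prod_(x <- s) ('X - x%:P) -> perm_eq s (map -%R s).
Proof.
move=> chN chA.
have size_s : size s = n.
  by have := size_char_poly A; rewrite chA size_prod_XsubC; case.
have := char_poly_compN A; rewrite chN {1}chA rmorph_prod /=.
under eq_bigr do rewrite comp_polyB comp_polyC comp_polyX.
rewrite prod_NXsubC size_s => /(congr1 ( *%R ((-1) ^+ n))); rewrite !signrMK chA.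
by move/prod_XsubC_eq; rewrite perm_sym.
Qed.

Section ConvexCombination.
Variables (R : numDomainType) (I : finType) (c mu : I -> R).
Hypotheses (c_ge0 : forall k, 0 <= c k) (c_sum1 : \sum_k c k = 1).

Let m := \sum_k c k * mu k.

Lemma convex_comb_dev : \sum_k c k * (mu k - m) = 0.
Proof.
under eq_bigr do rewrite mulrBr.
by rewrite sumrB -mulr_suml c_sum1 mul1r subrr.
Qed.

Lemma convex_comb_min_eq : (forall k, m <= mu k) -> forall k, c k * (mu k - m) = 0.
Proof.
move=> m_le k; apply: (psumr_eq0P _ convex_comb_dev) => // i _.
by rewrite mulr_ge0 // subr_ge0.
Qed.

Lemma convex_comb_le : (forall k, mu k \is Num.real) -> exists k, mu k <= m.
Proof.
move=> mu_real; have m_real : m \is Num.real.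
  by apply: rpred_sum => k _; exact: realM (ger0_real (c_ge0 k)) (mu_real k).
have [/existsP[k le_k]|] := boolP [exists k, mu k <= m]; first by exists k.
rewrite negb_exists => /forallP mu_gt.
have lt_m k : m < mu k by rewrite real_ltNge ?mu_gt.
have c0 k : c k = 0.
  have /eqP := convex_comb_min_eq (fun k => ltW (lt_m k)) k.
  by rewrite mulf_eq0 subr_eq0 (gt_eqF (lt_m k)) orbF => /eqP.
by move: c_sum1; rewrite big1 // => /eqP; rewrite eq_sym oner_eq0.
Qed.

End ConvexCombination.

Section UnitaryDiagonal.
Local Open Scope sesquilinear_scope.
Variables (C : numClosedFieldType) (n : nat) (P : 'M[C]_n) (mu : 'I_n -> C).
Hypotheses (P_unitary : P \is unitarymx) (mu_real : forall k, mu k \is Num.real).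

Let M := P^t* *m diag_mx (\row_k mu k) *m P.

Let M_entry v u : M v u = \sum_k P^t* v k * mu k * P k u.
Proof. by rewrite /M mul_mx_diag !mxE; apply: eq_bigr => k _; rewrite !mxE. Qed.

Let rows_orthonormal v u : \sum_k P^t* v k * P k u = (v == u)%:R.
Proof.
have PtP : P^t* *m P = 1%:M by apply: mulmx1C; apply/unitarymxP.
by have := congr1 (fun N : 'M_n => N v u) PtP; rewrite !mxE => ->.
Qed.

(* For M = P^* diag(mu) P with P unitary and mu real, M_vv is a convex
   combination of the mu_k (with weights |P_kv|^2); if it is their minimum,
   row v of M vanishes off the diagonal. *)
Lemma unitary_diag_row v :
  (exists k, mu k <= M v v) /\
  ((forall k, M v v <= mu k) -> forall u, u != v -> M v u = 0).
Proof.
pose a k := P^t* v k.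
have aE k : P k v = (a k)^* by rewrite /a !mxE conjCK.
pose c k := a k * (a k)^*.
have c_ge0 k : 0 <= c k by exact: mul_conjC_ge0.
have c_sum1 : \sum_k c k = 1.
  have := rows_orthonormal v v; rewrite eqxx mulr1n => <-.
  by apply: eq_bigr => k _; rewrite aE.
have Mvv : M v v = \sum_k c k * mu k.
  by rewrite M_entry; apply: eq_bigr => k _; rewrite aE /c mulrAC.
rewrite Mvv; split; first exact: convex_comb_le.
move=> /(convex_comb_min_eq c_ge0 c_sum1) dev0 u uv.
have a_mu k : a k * mu k = a k * \sum_j c j * mu j.
  have /eqP := dev0 k; rewrite mulf_eq0 mul_conjC_eq0 subr_eq0.
  by case/orP => /eqP ->; rewrite ?mul0r.
rewrite M_entry; under eq_bigr do rewrite a_mu mulrAC.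
by rewrite -mulr_suml rows_orthonormal eq_sym (negPf uv) mul0r.
Qed.

End UnitaryDiagonal.

Section Spectral.
Local Open Scope sesquilinear_scope.

Lemma spectral_diag_root (C : numClosedFieldType) n (A : 'M[C]_n) k :
  A \is normalmx -> root (char_poly A) (spectral_diag A 0 k).
Proof.
move=> /orthomx_spectralP {1}->; rewrite char_poly_similar ?spectral_unit //.
rewrite char_poly_trig ?diag_mx_is_trig //.
rewrite -(big_map (fun i => diag_mx (spectral_diag A) i i) predT (fun x => 'X - x%:P)).
rewrite root_prod_XsubC.
by apply/mapP; exists k; rewrite ?mem_index_enum // mxE eqxx.
Qed.

Local Notation rc R := (real_complex R).

Lemma symmetric_sq_spectral (R : rcfType) n (A : 'M[R]_n) (s : seq R) :
  A^T = A -> char_poly A = \prod_(x <- s) ('X - x%:P) ->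
  exists2 P : 'M[R[i]]_n, P \is unitarymx &
  exists2 mu : 'I_n -> R[i], (forall k, exists2 x, x \in s & mu k = rc R (x ^+ 2))
    & map_mx (rc R) (A *m A) = P^t* *m diag_mx (\row_k mu k) *m P.
Proof.
move=> AT chA.
pose Ac : 'M[R[i]]_n := map_mx (rc R) A.
have rc_conj (x : R) : (rc R x)^* = rc R x by apply: conj_Creal; rewrite complex_real.
have AcH : Ac^t* = Ac.
  apply/matrixP => i j; rewrite !mxE rc_conj.
  by have /matrixP/(_ i j) := AT; rewrite mxE => ->.
have Ac_normal : Ac \is normalmx by apply/normalmxP; rewrite AcH.
have /orthomx_spectralP AcE := Ac_normal.
set P := spectralmx Ac in AcE; set d := spectral_diag Ac in AcE.
have P_unitary : P \is unitarymx := spectral_unitarymx Ac.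
rewrite invmx_unitary // in AcE.
have d_eig k : exists2 x, x \in s & d 0 k = rc R x.
  have := spectral_diag_root k Ac_normal.
  rewrite -map_char_poly chA rmorph_prod /=.
  under eq_bigr do rewrite map_polyXsubC.
  rewrite -(big_map (rc R) predT (fun x => 'X - x%:P)) root_prod_XsubC.
  by case/mapP => x xs ->; exists x.
exists P => //; exists (fun k => d 0 k * (d 0 k)^*).
  move=> k; have [x xs ->] := d_eig k; exists x => //.
  by rewrite rc_conj rmorphXn expr2.
rewrite map_mxM -/Ac -{2}AcH AcE !trmx_mul !map_mxM trmxCK tr_diag_mx map_diag_mx.
rewrite !mulmxA -[P^t* *m diag_mx d *m P *m P^t*]mulmxA.
have -> : P *m P^t* = 1%:M by apply/unitarymxP.
rewrite mulmx1 -[P^t* *m diag_mx d *m _]mulmxA; congr (_ *m _ *m _).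
apply/matrixP => i j; rewrite mul_diag_mx !mxE.
by case: eqP => [->|]; rewrite ?mulr0 ?mul0r ?mulr1n ?mulr0n.
Qed.

Lemma symmetric_sq_diag_bounds (R : rcfType) n (A : 'M[R]_n) (s : seq R) v :
  A^T = A -> char_poly A = \prod_(x <- s) ('X - x%:P) ->
  (exists2 x, x \in s & x ^+ 2 <= (A *m A) v v) /\
  ((forall x, x \in s -> (A *m A) v v <= x ^+ 2) ->
     forall u, u != v -> (A *m A) v u = 0).
Proof.
move=> AT chA; have [P P_unitary [mu muE AAE]] := symmetric_sq_spectral AT chA.
have entry u : rc R ((A *m A) v u) = (P^t* *m diag_mx (\row_k mu k) *m P) v u.
  by have /matrixP/(_ v u) := AAE; rewrite mxE.
have mu_real k : mu k \is Num.real.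
  by have [x _ ->] := muE k; rewrite complex_real.
have [[k le_k] eq0] := unitary_diag_row P_unitary mu_real v.
split; first by move: le_k; have [x xs ->] := muE k; rewrite -entry lecR; exists x.
move=> ge_eig u uv.
have Mvv_le j : (P^t* *m diag_mx (\row_k mu k) *m P) v v <= mu j.
  by have [x xs ->] := muE j; rewrite -entry lecR ge_eig.
by have /eqP := eq0 Mvv_le u uv; rewrite -entry fmorph_eq0 => /eqP.
Qed.

End Spectral.

Section SymmetricSortedSeq.
Variables (R : realDomainType) (s : seq R).
Hypotheses (s_sorted : sorted (fun x y => y <= x) s) (s_sym : perm_eq s (map -%R s)).

Let ge_trans : transitive (fun x y : R => y <= x).
Proof. by move=> x y z /= le_yx le_zy; apply: le_trans le_zy le_yx. Qed.

Lemma sorted_symmetric_nth i : (i < size s)%N -> s`_i = - s`_(size s - i.+1).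
Proof.
have sE : s = rev (map -%R s).
  apply: (@sorted_eq _ (fun x y => y <= x)) => //.
  - by move=> x y /andP[le_yx le_xy]; apply/le_anti; rewrite le_yx le_xy.
  - rewrite rev_sorted sorted_map; apply: sub_sorted s_sorted => x y /=.
    by rewrite lerN2.
  - by rewrite perm_sym perm_rev perm_sym.
move=> lt_i; rewrite {1}sE nth_rev size_map // (nth_map 0) //.
by rewrite ltn_subrL (leq_ltn_trans _ lt_i).
Qed.

Lemma sorted_nth_ge i j : (i <= j)%N -> (j < size s)%N -> s`_j <= s`_i.
Proof.
move=> le_ij lt_j.
by apply: (sorted_leq_nth ge_trans (fun x => lexx x) 0 s_sorted); rewrite ?inE //; lia.
Qed.

End SymmetricSortedSeq.

Lemma HL_index_le_abs (R : rcfType) (s : seq R) lam :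
  sorted (fun x y => y <= x) s -> perm_eq s (map -%R s) -> lam \in s ->
  HL_index (size s) s <= `|lam|.
Proof.
move=> s_sorted s_sym lam_s.
(* Restated with size s at type R, so that lia sees a single atom. *)
have sym i : (i < size s)%N -> s`_i = - s`_(size s - i.+1).
  exact: sorted_symmetric_nth.
have mono i k : (i <= k)%N -> (k < size s)%N -> s`_k <= s`_i.
  exact: sorted_nth_ge.
have lt_j : (index lam s < size s)%N by rewrite index_mem.
have s_j : s`_(index lam s) = lam by rewrite nth_index.
set j := index lam s in lt_j s_j.
rewrite /HL_index /= uphalf_half; have := odd_double_half (size s); set m := (size s)./2.
case: (odd (size s)) => /= nE; rewrite ?add0n ?maxxx.
  have mid : s`_m = - s`_m by rewrite {1}sym; [congr (- s`_ _)|]; lia.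
  have -> : s`_m = 0.
    by apply/eqP; rewrite -[_ == 0](mulrn_eq0 _ 2) mulr2n {2}mid subrr.
  by rewrite normr0 normr_ge0.
have m_gt0 : (0 < m)%N by move: lt_j; rewrite -nE; lia.
have sym_mid : s`_m.-1 = - s`_m by rewrite sym; [congr (- s`_ _)|]; lia.
have le_mid : s`_m <= s`_m.-1 by apply: mono; lia.
have mid_ge0 : 0 <= s`_m.-1 by move: le_mid; rewrite sym_mid => ?; lra.
rewrite -[`|s`_m|]normrN -sym_mid maxxx ger0_norm //.
have := ler_norm lam; have := ler_norm (- lam); rewrite normrN.
case: (leqP j m.-1) => le_jm.
  by have := mono j m.-1 le_jm ltac:(lia); rewrite s_j; lra.
by have := mono m j ltac:(lia) lt_j; rewrite s_j; lra.
Qed.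

Section Degrees.
Variables (n : nat) (e : rel 'I_n).

(* The order n bounds all degrees; it is the default value of min_degree. *)
Lemma deg_le_order v : (deg e v <= n)%N.
Proof. by rewrite /deg; apply: leq_trans (max_card _) _; rewrite card_ord. Qed.

Lemma bigmin_deg_attained (P : pred 'I_n) v : P v ->
  exists2 u, P u & \big[minn/n]_(w | P w) deg e w = deg e u.
Proof.
move=> Pv; rewrite -minEnat.
by have [u Pu ->] := eq_bigmin v P (deg e) Pv (fun w _ => deg_le_order w); exists u.
Qed.

Lemma min_degree_le v : (min_degree e <= deg e v)%N.
Proof.
by rewrite /min_degree -minEnat; exact: (@bigmin_le_cond _ nat _ _ v (fun _ => true)).
Qed.

Lemma min_degree_attained : (0 < n)%N -> exists v, min_degree e = deg e v.
Proof.
move=> n_gt0; have [v _ dv] := @bigmin_deg_attained (fun _ => true) (Ordinal n_gt0) isT.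
by exists v.
Qed.

Lemma comp_min_degree_attained x :
  exists2 u, u \in component e x & comp_min_degree e (component e x) = deg e u.
Proof. by apply: (bigmin_deg_attained (v := x)); rewrite /component inE connect0. Qed.

Lemma deg_gt0_nbr v : (0 < deg e v)%N -> exists w, e v w.
Proof. by rewrite /deg card_gt0 => /set0Pn [w]; rewrite inE; exists w. Qed.

Lemma deg_ge2_other_nbr w v : (2 <= deg e w)%N -> exists2 u, u != v & e w u.
Proof.
rewrite /deg (cardsD1 v) => deg_w.
have : (0 < #|[set u | e w u] :\ v|)%N by move: deg_w; case: (v \in _) => /=; lia.
by rewrite card_gt0 => /set0Pn [u]; rewrite !inE => /andP[uv ewu]; exists u.
Qed.

Lemma deg1_nbr_unique u w : deg e u = 1%N -> e u w -> forall z, e u z -> z = w.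
Proof.
move=> /eqP /cards1P [y yE] euw z euz.
have : z \in [set y] by rewrite -yE inE.
have : w \in [set y] by rewrite -yE inE.
by rewrite !inE => /eqP -> /eqP.
Qed.

End Degrees.

Section SimpleGraph.
Variables (n : nat) (e : rel 'I_n).
Hypotheses (e_sym : symmetric e) (e_irr : irreflexive e).

Lemma pendant_walk2_or_K2 x u w : connect e x u -> deg e u = 1%N -> e u w ->
  (exists2 u', u' != u & e w u') \/ is_K2 e (component e x).
Proof.
move=> cxu deg_u euw.
have [/existsP [u' /andP [u'u ewu']]|] := boolP [exists u', (u' != u) && e w u'].
  by left; exists u'.
move=> /existsPn w_nbr; right; exists u, w.
have nbr_u := deg1_nbr_unique deg_u euw.
have nbr_w z : e w z -> z = u by move=> ewz; have := w_nbr z; rewrite ewz andbT negbK => /eqP.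
have S_closed : closed e [set u; w].
  have step a b : e a b -> a \in [set u; w] -> b \in [set u; w].
    move=> eab; rewrite !inE => /orP[] /eqP ea; subst a.
      by rewrite (nbr_u b eab) eqxx orbT.
    by rewrite (nbr_w b eab) eqxx.
  by move=> a b eab; apply/idP/idP; [exact: step | apply: step; rewrite e_sym].
split; first by apply: contraTneq euw => ->; rewrite e_irr.
split => //; apply/setP => y; rewrite [in LHS]inE.
have csym := sym_connect_sym e_sym.
have -> : connect e x y = connect e u y.
  apply/idP/idP => h; first by apply: connect_trans h; rewrite csym.
  exact: connect_trans cxu h.
apply/idP/idP => [cuy|]; first by rewrite -(closed_connect S_closed cuy) !inE eqxx.
by rewrite !inE => /orP[] /eqP ->; [exact: connect0 | exact: connect1].
Qed.

End SimpleGraph.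

Section AdjacencySpectrum.
Variables (R : rcfType) (n : nat) (e : rel 'I_n) (s : seq R).
Hypotheses (e_sym : symmetric e) (e_bip : bipartite e)
  (s_spec : sorted_spectrum (adjmx R e) s).

Local Notation A := (adjmx R e).

Lemma adjmx_tr : A^T = A.
Proof. by apply/matrixP => i j; rewrite !mxE e_sym. Qed.

Lemma adjmx_sq_entry v u : (A *m A) v u = \sum_w (e v w)%:R * (e w u)%:R.
Proof. by rewrite !mxE; apply: eq_bigr => w _; rewrite !mxE. Qed.

Lemma adjmx_sq_diag v : (A *m A) v v = (deg e v)%:R.
Proof.
rewrite adjmx_sq_entry /deg; under eq_bigr do rewrite (e_sym _ v) -natrM.
rewrite -natr_sum; congr _%:R.
rewrite -sum1_card [RHS]big_mkcond /=.
by apply: eq_bigr => w _; rewrite inE; case: (e v w).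
Qed.

Lemma adjmx_sq_walk2 v w u : e v w -> e w u -> (A *m A) v u != 0.
Proof.
move=> evw ewu; rewrite adjmx_sq_entry psumr_eq0 => [|j _]; last first.
  by rewrite mulr_ge0 ?ler0n.
by apply/allPn; exists w; rewrite ?mem_index_enum // evw ewu mulr1 oner_eq0.
Qed.

Lemma spectrum_size : size s = n.
Proof.
by have := size_char_poly A; rewrite s_spec.2 size_prod_XsubC; case.
Qed.

Lemma bipartite_spectrum_symmetric : perm_eq s (map -%R s).
Proof.
have [f f_proper] := e_bip; apply: spectrum_symmetric s_spec.2.
apply: (char_poly_opp_bipartite (f := f)) => i j; rewrite mxE.
by case eij: (e i j) => /=; [move=> _; exact: f_proper | rewrite eqxx].
Qed.

Lemma HL_index_le_sqr x : x \in s -> HL_index n s <= Num.sqrt (x ^+ 2).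
Proof.
rewrite sqrtr_sqr -spectrum_size; apply: HL_index_le_abs s_spec.1 _.
exact: bipartite_spectrum_symmetric.
Qed.

Lemma HL_index_le_sqrt_deg v : HL_index n s <= Num.sqrt (deg e v)%:R.
Proof.
have [x xs] := (symmetric_sq_diag_bounds v adjmx_tr s_spec.2).1.
rewrite adjmx_sq_diag => le_x; apply: le_trans (HL_index_le_sqr xs) _.
by rewrite ler_sqrt ?ler0n.
Qed.

Lemma HL_index_lt_sqrt_deg v w u : e v w -> e w u -> u != v ->
  HL_index n s < Num.sqrt (deg e v)%:R.
Proof.
move=> evw ewu uv.
have [eig_ge|] := boolP (all (fun x => (deg e v)%:R <= x ^+ 2) s).
  have := (symmetric_sq_diag_bounds v adjmx_tr s_spec.2).2.
  rewrite adjmx_sq_diag => /(_ (fun x xs => allP eig_ge x xs) u uv) /eqP.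
  by rewrite (negPf (adjmx_sq_walk2 evw ewu)).
case/allPn => x xs; rewrite -ltNge => lt_x.
apply: le_lt_trans (HL_index_le_sqr xs) _.
by rewrite ltr_sqrt // (le_lt_trans (sqr_ge0 x)).
Qed.

End AdjacencySpectrum.

Theorem theorem2p5 (R : rcfType) (n : nat) (e : rel 'I_n) (s : seq R) :
  (0 < n)%N ->
  simple_graph e ->
  bipartite e ->
  sorted_spectrum (adjmx R e) s ->
  HL_index n s <= Num.sqrt (min_degree e)%:R /\
  ((2 <= min_degree e)%N \/
   (min_degree e = 1%N /\
    exists v : 'I_n, comp_min_degree e (component e v) = 1%N
                     /\ ~ is_K2 e (component e v)) ->
   HL_index n s < Num.sqrt (min_degree e)%:R).
Proof.
move=> n_gt0 [e_sym e_irr] e_bip s_spec.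
have HL_lt := HL_index_lt_sqrt_deg e_sym e_bip s_spec.
have [v0 deg_v0] := min_degree_attained e n_gt0.
split; first by rewrite deg_v0; exact: HL_index_le_sqrt_deg.
case=> [d_ge2|[d1 [x [comp_d1 not_K2]]]].
  have [w ev0w] : exists w, e v0 w by apply: deg_gt0_nbr; rewrite -deg_v0; lia.
  have [u uv0 ewu] := deg_ge2_other_nbr v0 (leq_trans d_ge2 (min_degree_le e w)).
  by rewrite deg_v0; exact: HL_lt ev0w ewu uv0.
have [u xu deg_u] := comp_min_degree_attained e x; rewrite comp_d1 in deg_u.
have [w euw] : exists w, e u w by apply: deg_gt0_nbr; rewrite -deg_u.
have cxu : connect e x u by move: xu; rewrite inE.
have [[u' u'u ewu']|//] := pendant_walk2_or_K2 e_sym e_irr cxu (esym deg_u) euw.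
by rewrite d1 deg_u; exact: HL_lt euw ewu' u'u.
Qed.
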